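(* Let $\mathcal{A}=\langle Q,\Sigma,\delta\rangle$ be an $n$-state DFA whose transition monoid is $T_n$, let $x\in\Sigma$ be a fixed letter of rank $n-1$, and let $k\ge 0$. If the digraph $\Gamma_k$ is strongly connected, then every proper non-empty subset $R\subset Q$ can be extended by some word of length at most $k+1$.
   Context: Words act on states letter by letter from left to right. The transition monoid is the monoid of transformations of $Q$ generated by the letters; $T_n$ is the monoid of all self-maps of an $n$-element set. A letter has rank $n-1$ if $|Q\cdot x|=n-1$. For such $x$, $\mathrm{excl}(x)$ is the unique state in $Q\setminus Q\cdot x$, and $\mathrm{dupl}(x)$ is the unique state $p$ with $p=q_1\cdot x=q_2\cdot x$ for some $q_1\ne q_2$. For a proper non-empty $R\subset Q$ and a word $w$, $R$ can be extended by $w$ if $|Rw^{-1}|>|R|$, where $Rw^{-1}=\{q\in Q\mid q\cdot w\in R\}$. Let $\Pi\subseteq\Sigma$ be the set of letters acting as permutations of $Q$, and $\Pi^i$ the set of words of length at most $i$ over $\Pi$ (including the empty word). $\Gamma_i$ is the digraph with vertex set $Q$ and edge set $E_i=\{(\mathrm{excl}(x)\cdot w,\ \mathrm{dupl}(x)\cdot w)\mid w\in\Pi^i\}$. *)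

From Stdlib Require Export Relations.Relation_Operators.
From mathcomp Require Import all_boot.
Set Implicit Arguments. Unset Strict Implicit. Unset Printing Implicit Defensive.

Definition act (Q S : finType) (delta : Q -> S -> Q) (q : Q) (w : seq S) : Q :=
  foldl delta q w.

Definition full_transition_monoid (Q S : finType) (delta : Q -> S -> Q) : Prop :=
  forall f : Q -> Q, exists w : seq S, forall q, act delta q w = f q.

Definition img (Q S : finType) (delta : Q -> S -> Q) (x : S) : {set Q} :=
  [set delta q x | q : Q].

Definition rank (Q S : finType) (delta : Q -> S -> Q) (x : S) : nat :=
  #|img delta x|.

(* p = excl(x) : p is not in Q.x  (unique when rank x = |Q|-1) *)
Definition is_excl (Q S : finType) (delta : Q -> S -> Q) (x : S) (p : Q) : Prop :=
  p \notin img delta x.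

(* p = dupl(x) : p = q1.x = q2.x for some q1 <> q2 (unique when rank x = |Q|-1) *)
Definition is_dupl (Q S : finType) (delta : Q -> S -> Q) (x : S) (p : Q) : Prop :=
  exists q1 q2 : Q, q1 <> q2 /\ delta q1 x = p /\ delta q2 x = p.

Definition is_perm_letter (Q S : finType) (delta : Q -> S -> Q) (a : S) : Prop :=
  injective (fun q => delta q a).

Definition in_Pi (Q S : finType) (delta : Q -> S -> Q) (i : nat) (w : seq S) : Prop :=
  size w <= i /\ (forall a, a \in w -> is_perm_letter delta a).

Definition Gamma_edge (Q S : finType) (delta : Q -> S -> Q) (x : S) (i : nat)
    (u v : Q) : Prop :=
  exists w p d, in_Pi delta i w /\ is_excl delta x p /\ is_dupl delta x d /\
    u = act delta p w /\ v = act delta d w.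

Definition strongly_connected (Q : Type) (e : Q -> Q -> Prop) : Prop :=
  forall u v : Q, clos_refl_trans Q e u v.

Definition preimg (Q S : finType) (delta : Q -> S -> Q) (R : {set Q}) (w : seq S)
  : {set Q} := [set q | act delta q w \in R].

Definition extendable_by (Q S : finType) (delta : Q -> S -> Q) (R : {set Q})
    (w : seq S) : Prop := #|R| < #|preimg delta R w|.

(* If R is proper and non-empty, strong connectivity of Gamma_k gives an edge
   (excl(x).w, dupl(x).w) leaving the complement of R and entering R, with w a
   permutation word of length at most k.  Then T := R w^{-1} has |R| elements,
   avoids excl(x), so lies in Q.x, and contains dupl(x).  Since x identifies
   two states over dupl(x), the preimage of T under x, which is R (xw)^{-1},
   is strictly larger than T. *)
From mathcomp Require Import all_boot.

Set Implicit Arguments.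
Unset Strict Implicit.
Unset Printing Implicit Defensive.

Lemma clos_rt_cross_in (T : finType) (e : T -> T -> Prop) (A : {set T}) u v :
  clos_refl_trans T e u v -> u \notin A -> v \in A ->
  exists a b, [/\ e a b, a \notin A & b \in A].
Proof.
elim=> [y z eyz | y | y z t _ IHyz _ IHzt] yNA tA; first by exists y, z.
  by rewrite tA in yNA.
by case: (boolP (z \in A)) => [zA | zNA]; [apply: IHyz | apply: IHzt].
Qed.

Lemma card_preimset_lt (aT rT : finType) (f : aT -> rT) (A : {set rT}) q1 q2 :
  A \subset f @: aT -> q1 != q2 -> f q1 = f q2 -> f q1 \in A ->
  #|A| < #|f @^-1: A|.
Proof.
move=> sAim q12 fq12 fq1A.
have {1}-> : A = f @: (f @^-1: A).
  apply/setP => a; apply/idP/imsetP => [aA | [q] ].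
    have /imsetP[q _ aE] := subsetP sAim a aA.
    by exists q; rewrite // inE -aE.
  by rewrite inE => fqA ->.
rewrite ltn_neqAle leq_imset_card andbT; apply/negP => /imset_injP f_inj.
by case/eqP: q12; apply: f_inj; rewrite // inE -?fq12.
Qed.

Section Automaton.

Variables (Q S : finType) (delta : Q -> S -> Q).

Lemma act_perm_inj w :
  (forall a, a \in w -> is_perm_letter delta a) -> injective (act delta ^~ w).
Proof.
elim: w => [|a w IHw] perm_w q1 q2 //= eq12.
apply: (perm_w a (mem_head a w)); apply: IHw eq12 => b bw.
by apply: perm_w; rewrite in_cons bw orbT.
Qed.

Lemma card_preimg_perm R w :
  (forall a, a \in w -> is_perm_letter delta a) -> #|preimg delta R w| = #|R|.
Proof.
move=> perm_w; rewrite -(card_preimset R (act_perm_inj perm_w)).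
by apply: eq_card => q; rewrite !inE.
Qed.

Lemma preimg_cons R a w :
  preimg delta R (a :: w) = (delta ^~ a) @^-1: preimg delta R w.
Proof. by apply/setP => q; rewrite !inE. Qed.

Lemma img_excl x p :
  rank delta x = #|Q|.-1 -> is_excl delta x p -> img delta x = [set~ p].
Proof.
move=> rk_x p_excl; apply/eqP; rewrite eqEcard cardsC1 -/(rank delta x) rk_x.
rewrite leqnn andbT; apply/subsetP => q qx; rewrite !inE.
by apply: contraNneq p_excl => <-.
Qed.

End Automaton.

Theorem lemma1 (Q S : finType) (delta : Q -> S -> Q) (n : nat) (x : S) (k : nat) :
  #|Q| = n ->
  full_transition_monoid delta ->
  rank delta x = n.-1 ->
  strongly_connected (Gamma_edge delta x k) ->
  forall R : {set Q}, R != set0 -> R \proper [set: Q] ->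
    exists w : seq S, size w <= k.+1 /\ extendable_by delta R w.
Proof.
move=> <- _ rk_x conn R /set0Pn[v vR] /properP[_ [u _ uNR]].
have [a [b [edge aNR bR]]] := clos_rt_cross_in (conn u v) uNR vR.
case: edge => w [p [d [[size_w perm_w] [p_excl [[q1 [q2 [q12 [xq1 xq2]]]]]]]]].
case=> ea eb; subst a b.
exists (x :: w); split=> //.
rewrite /extendable_by preimg_cons -(card_preimg_perm R perm_w).
apply: (@card_preimset_lt _ _ _ _ q1 q2).
- apply/subsetP => q; rewrite -[_ @: _]/(img delta x) (img_excl rk_x p_excl).
  by rewrite !inE; apply: contraTneq => ->.
- exact/eqP.
- by rewrite xq1 xq2.
- by rewrite xq1 inE.
Qed.
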